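(* Let $\mathbf{G}$ be a labeled multilayer directed network (as defined in the context) on node set $\mathcal{V}=\{v_1,\dots,v_n\}$ with label set $\{C_1,\dots,C_h\}$ and attractiveness values $A_{i,l}$ such that, for each $l$, the values $A_{1,l},\dots,A_{n,l}$ are pairwise distinct. Suppose that $\mathbf{G}$ is extremal, i.e. $P(\mathbf{G})=\min_{\mathbf{H}\in\mathcal{R}(\mathbf{G})}P(\mathbf{H})$ or $P(\mathbf{G})=\max_{\mathbf{H}\in\mathcal{R}(\mathbf{G})}P(\mathbf{H})$. Let $E$ be a nonempty subset of the edge set $\mathcal{E}$ of $\mathbf{G}$ such that all edges of $E$ lie in the same layer $\mathbf{G}_l$ (i.e. $C_l\in\mathcal{C}(e)$ for every $e\in E$). Then there exists a node $v\in\lceil E\rceil_{tar}$ that has no $(2,\mathbf{G})$-follower in $\lceil E\rceil_{src}$.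
   Context: A labeled multilayer directed network $\mathbf{G}=(\mathcal{V},\mathcal{E})$ is a finite simple directed graph (no self-loops, no multiple edges) on nodes $\mathcal{V}=\{v_1,\dots,v_n\}$ in which each edge $v_i\to v_j\in\mathcal{E}$ carries a nonempty label set $\mathcal{C}(i,j)\subseteq\{C_1,\dots,C_h\}$; an ordered pair $(v_i,v_j)$ is an edge iff $\mathcal{C}(i,j)\neq\emptyset$. The $l$-th layer $\mathbf{G}_l=(\mathcal{V}_l,\mathcal{E}_l)$ consists of all edges with $C_l\in\mathcal{C}(i,j)$ and their endpoints. Each node $v_i$ has, for each $l$, an attractiveness $A_{i,l}\ge 0$; let $A_{\max,l}=\max_i A_{i,l}$. The potential energy of $v_i$ in layer $l$ is $P_l(i)=\sum_{j=1}^n (A_{\max,l}-A_{j,l})\,\chi(v_i\to v_j\in\mathcal{E}_l)$, and the total potential energy is $P(\mathbf{G})=\sum_{i=1}^n\sum_{l=1}^h P_l(i)$. A rewiring move replaces, for some layer $l$ and some edge $v_j\to v_k\in\mathcal{E}_l$, the layer-$l$ edge $v_j\to v_k$ by a layer-$l$ edge $v_j\to v_w$ with $w\neq j$ and $v_j\to v_w\notin\mathcal{E}_l$ (i.e. $C_l$ is removed from $\mathcal{C}(j,k)$ and added to $\mathcal{C}(j,w)$; the edge $v_j\to v_k$ disappears if its label set becomes empty, and $v_j\to v_w$ is created if it did not exist). $\mathcal{R}(\mathbf{G})$ denotes the set of all labeled multilayer networks (same nodes, same attractiveness values) obtainable from $\mathbf{G}$ by finite sequences of rewiring moves (including $\mathbf{G}$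 itself). For an edge set $E$, $\lceil E\rceil_{src}$ (resp. $\lceil E\rceil_{tar}$) is the set of source (resp. target) nodes of edges of $E$. A node $v_i$ is a $(2,\mathbf{G})$-follower of $v_j$ if the directed shortest-path distance from $v_i$ to $v_j$ in $\mathbf{G}$ (ignoring labels) equals exactly $2$. *)

From HB Require Import structures.
From mathcomp Require Import all_boot all_order all_algebra.
From Stdlib Require Import Relations.Relation_Operators.
Set Implicit Arguments. Unset Strict Implicit. Unset Printing Implicit Defensive.
Import Order.TTheory GRing.Theory Num.Theory.
Local Open Scope ring_scope.

(* Nodes v_1..v_n are 'I_n, labels C_1..C_h are 'I_h.
   A labeled multilayer directed network is its label-set function:
   G (i,j) = C(i,j); (i,j) is an edge iff G (i,j) != set0. *)
Definition network (n h : nat) := {ffun 'I_n * 'I_n -> {set 'I_h}}.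

(* no self-loops (multiple edges are excluded by construction) *)
Definition simple_net n h (G : network n h) : Prop :=
  forall i : 'I_n, G (i, i) = set0.

Definition is_edge n h (G : network n h) (i j : 'I_n) : bool := G (i, j) != set0.

(* A_max,l = max_i A_{i,l}  (A >= 0, so 0 is a neutral base) *)
Definition Amax (R : realDomainType) n h (A : 'I_n -> 'I_h -> R) (l : 'I_h) : R :=
  \big[Num.max/0]_(j : 'I_n) A j l.

Definition pot_layer (R : realDomainType) n h (A : 'I_n -> 'I_h -> R)
  (G : network n h) (l : 'I_h) (i : 'I_n) : R :=
  \sum_(j : 'I_n) (Amax A l - A j l) * (l \in G (i, j))%:R.

Definition potential (R : realDomainType) n h (A : 'I_n -> 'I_h -> R)
  (G : network n h) : R :=
  \sum_(i : 'I_n) \sum_(l : 'I_h) pot_layer A G l i.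

Definition rewire_step n h (G H : network n h) : Prop :=
  exists (l : 'I_h) (j k w : 'I_n),
    [/\ l \in G (j, k), w != j, l \notin G (j, w) &
      H = [ffun p => if p == (j, k) then G p :\ l
                     else if p == (j, w) then l |: G p else G p]].

Definition rewirings n h (G H : network n h) : Prop :=
  clos_refl_trans (network n h) (@rewire_step n h) G H.

Definition extremal (R : realDomainType) n h (A : 'I_n -> 'I_h -> R)
  (G : network n h) : Prop :=
  (forall H, rewirings G H -> potential A G <= potential A H) \/
  (forall H, rewirings G H -> potential A H <= potential A G).

Definition dist2 n h (G : network n h) (i j : 'I_n) : Prop :=
  [/\ i != j, ~~ is_edge G i j & exists k : 'I_n, is_edge G i k && is_edge G k j].

Definition follower2 n h (G : network n h) (i j : 'I_n) : Prop := dist2 G i j.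

Definition src_nodes n (E : {set 'I_n * 'I_n}) : {set 'I_n} := [set e.1 | e in E].
Definition tar_nodes n (E : {set 'I_n * 'I_n}) : {set 'I_n} := [set e.2 | e in E].

From mathcomp Require Import all_boot all_order all_algebra.
From Stdlib Require Import Relations.Relation_Operators.
Set Implicit Arguments. Unset Strict Implicit. Unset Printing Implicit Defensive.
Import Order.TTheory GRing.Theory Num.Theory.
Local Open Scope ring_scope.

(* Rewiring the layer-l edge j -> k to j -> w changes the total
   potential by exactly A_{k,l} - A_{w,l}: only the term of P_l(j) indexed by
   k disappears and the one indexed by w appears, and the A_max,l parts
   cancel.  Now let u -> k be an edge of E (in layer l) and suppose u is a
   (2,G)-follower of a target v.  Then u -> v is not an edge and u <> v, so
   moving the layer-l edge u -> k to u -> v is a legal rewiring, and k <> v.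
   If G is a minimum of P on R(G) this yields A_{v,l} <= A_{k,l}; hence a
   target of E of maximal layer-l attractiveness can have no follower among
   the sources, since k is a target as well and the A_{.,l} are distinct.
   Symmetrically, a target of minimal attractiveness works when G is a
   maximum. *)

Lemma sum_delta (R : pzRingType) (T : finType) (F : T -> R) (j : T) :
  \sum_i (i == j)%:R * F i = F j.
Proof.
rewrite (bigD1 j) //= eqxx mul1r big1 ?addr0 // => i /negbTE ->.
by rewrite mul0r.
Qed.

Definition rewire n h (G : network n h) (l : 'I_h) (j k w : 'I_n) :
    network n h :=
  [ffun p => if p == (j, k) then G p :\ l
             else if p == (j, w) then l |: G p else G p].

Section Rewiring.
Variables (R : realDomainType) (n h : nat) (G : network n h).
Variables (A : 'I_n -> 'I_h -> R) (l : 'I_h) (j k w : 'I_n).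
Hypotheses (l_jk : l \in G (j, k)) (l_jw : l \notin G (j, w)).

Let H := rewire G l j k w.

Lemma rewire_neq : k != w.
Proof. by apply: contraNneq l_jw => <-. Qed.

Lemma rewire_stepP : w != j -> rewire_step G H.
Proof. by move=> wj; exists l, j, k, w. Qed.

Lemma rewire_other (i jj : 'I_n) (l' : 'I_h) :
  ~~ ((i == j) && (l' == l)) -> (l' \in H (i, jj)) = (l' \in G (i, jj)).
Proof.
rewrite /H ffunE !xpair_eqE negb_and => ne.
case: (eqVneq i j) ne => [-> /= l'l|] //=.
case: ifP => _; first by rewrite in_setD1 l'l.
by case: ifP => _; rewrite ?in_setU1 ?(negbTE l'l).
Qed.

Lemma rewire_layer (jj : 'I_n) :
  (l \in H (j, jj))%:R =
    (l \in G (j, jj))%:R + (jj == w)%:R - (jj == k)%:R :> R.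
Proof.
rewrite /H ffunE !xpair_eqE eqxx /=.
case: (eqVneq jj k) => [->|_]; first by rewrite (negbTE rewire_neq)
  !in_setD1 eqxx l_jk addr0 subrr.
case: (eqVneq jj w) => [->|_] /=; last by rewrite addr0 subr0.
by rewrite in_setU1 eqxx (negbTE l_jw) add0r subr0.
Qed.

Lemma pot_layer_rewire (i : 'I_n) (l' : 'I_h) :
  pot_layer A H l' i =
    pot_layer A G l' i + ((i == j) && (l' == l))%:R * (A k l - A w l).
Proof.
case: (boolP ((i == j) && (l' == l))) => [/andP [/eqP -> /eqP ->]|ne].
  rewrite mul1r /pot_layer.
  under eq_bigr => jj _ do rewrite rewire_layer mulrBr mulrDr.
  rewrite sumrB big_split /=.
  under [in X in _ + X - _]eq_bigr => jj _ do rewrite mulrC.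
  under [in X in _ - X]eq_bigr => jj _ do rewrite mulrC.
  rewrite !sum_delta -addrA; congr (_ + _).
  by rewrite opprB addrC addrA subrK.
rewrite mul0r addr0; apply: eq_bigr => jj _.
by rewrite rewire_other.
Qed.

Lemma potential_rewire : potential A H = potential A G + (A k l - A w l).
Proof.
rewrite /potential.
under eq_bigr => i _ do under eq_bigr => l' _ do
  rewrite pot_layer_rewire -mulnb natrM -mulrA.
under eq_bigr => i _ do rewrite big_split /= -mulr_sumr sum_delta.
by rewrite big_split /= sum_delta.
Qed.

End Rewiring.

Section Followers.
Variables (R : realDomainType) (n h : nat) (G : network n h).
Variables (A : 'I_n -> 'I_h -> R) (E : {set 'I_n * 'I_n}) (l : 'I_h).
Hypothesis E_in_layer : forall e, e \in E -> l \in G e.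

Lemma follower_rewiring (u v : 'I_n) :
  u \in src_nodes E -> follower2 G u v ->
  exists2 k, k \in tar_nodes E &
    [/\ k != v, rewirings G (rewire G l u k v) &
        potential A (rewire G l u k v) = potential A G + (A k l - A v l)].
Proof.
case/imsetP=> -[u' k] uk_E -> [uv not_uv _] /=.
have l_uk : l \in G (u', k) by exact: E_in_layer.
have l_uv : l \notin G (u', v).
  by move: not_uv; rewrite /is_edge negbK => /eqP ->; rewrite in_set0.
exists k; first exact: (imset_f _ uk_E).
split; last exact: potential_rewire.
- exact: rewire_neq l_uk l_uv.
- by apply/rt_step/rewire_stepP; rewrite // eq_sym.
Qed.

Lemma min_follower (u v : 'I_n) :
  (forall H, rewirings G H -> potential A G <= potential A H) ->
  u \in src_nodes E -> follower2 G u v ->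
  exists2 k, k \in tar_nodes E & k != v /\ A v l <= A k l.
Proof.
move=> Gmin uE uv; have [k kE [kv /Gmin le_GH PH]] := follower_rewiring uE uv.
by exists k; move: le_GH; rewrite PH lerDl subr_ge0.
Qed.

Lemma max_follower (u v : 'I_n) :
  (forall H, rewirings G H -> potential A H <= potential A G) ->
  u \in src_nodes E -> follower2 G u v ->
  exists2 k, k \in tar_nodes E & k != v /\ A k l <= A v l.
Proof.
move=> Gmax uE uv; have [k kE [kv /Gmax le_HG PH]] := follower_rewiring uE uv.
by exists k; move: le_HG; rewrite PH gerDl subr_le0.
Qed.

End Followers.

Theorem lemma1 (R : realDomainType) (n h : nat) (G : network n h)
  (A : 'I_n -> 'I_h -> R) (E : {set 'I_n * 'I_n}) (l : 'I_h) :
  simple_net G ->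
  (forall i l', 0 <= A i l') ->
  (forall l', injective (fun i => A i l')) ->
  extremal A G ->
  E != set0 ->
  (forall e, e \in E -> l \in G e) ->
  exists2 v, v \in tar_nodes E &
    forall u, u \in src_nodes E -> ~ follower2 G u v.
Proof.
move=> _ _ A_inj [Gmin|Gmax] /set0Pn [e eE] E_l;
  have tE : e.2 \in tar_nodes E := imset_f _ eE.
-
  case: (@arg_maxP _ R _ e.2 (mem (tar_nodes E)) (fun x => A x l) tE)
    => v vE v_max.
  exists v => // u uE /(min_follower E_l Gmin uE) [k kE [kv vk]].
  have Akv : A k l = A v l by apply/le_anti; rewrite vk andbT; exact: v_max.
  by rewrite (A_inj l _ _ Akv) eqxx in kv.
-
  case: (@arg_minP _ R _ e.2 (mem (tar_nodes E)) (fun x => A x l) tE)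
    => v vE v_min.
  exists v => // u uE /(max_follower E_l Gmax uE) [k kE [kv kv_le]].
  have Akv : A k l = A v l by apply/le_anti; rewrite kv_le; exact: v_min.
  by rewrite (A_inj l _ _ Akv) eqxx in kv.
Qed.
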